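(* Let $(\mathcal{X},\rho)$ be a metric space, $\eta:\mathcal{X}\to\mathcal{Y}$ a function, and $U\subset\mathcal{X}$ a mutually-labeling set for $\eta$. Let $\mathbb{X}=(X_n)_{n\ge0}$ be an arbitrary process (or sequence) in $\mathcal{X}$ and $(\tilde X_n)_{n\ge1}$ any nearest neighbor process of it. Then \[\sum_{n=1}^\infty\mathbb{1}\{X_n\in U\text{ and }\eta(X_n)\ne\eta(\tilde X_n)\}\le1.\]
   Context: $\mathrm{margin}_\eta(x)=\inf\{\rho(x,x'):\eta(x')\ne\eta(x)\}$ (infimum of empty set $=+\infty$). A set $U$ is mutually-labeling for $\eta$ if $\mathrm{diam}(U)<\mathrm{margin}_\eta(x)$ for all $x\in U$, where $\mathrm{diam}(U)=\sup_{z,z'\in U}\rho(z,z')$. A nearest neighbor process is any $(\tilde X_n)_{n\ge1}$ with $\tilde X_n\in\arg\min_{x\in\{X_0,\dots,X_{n-1}\}}\rho(X_n,x)$. *)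

From HB Require Import structures.
From mathcomp Require Import all_boot all_order all_algebra.
From mathcomp Require Import boolp classical_sets reals constructive_ereal ereal.
Set Implicit Arguments. Unset Strict Implicit. Unset Printing Implicit Defensive.
Import Order.TTheory GRing.Theory Num.Theory.
Local Open Scope classical_set_scope.
Local Open Scope ring_scope.

Definition is_metric (R : realType) (X : Type) (rho : X -> X -> R) : Prop :=
  [/\ (forall x y, 0 <= rho x y),
      (forall x y, rho x y = 0 <-> x = y),
      (forall x y, rho x y = rho y x) &
      (forall x y z, rho x z <= rho x y + rho y z)].

(* margin_eta(x) = inf { rho(x,x') : eta x' <> eta x }, inf of empty set = +oo *)
Definition margin (R : realType) (X Y : Type) (rho : X -> X -> R)
    (eta : X -> Y) (x : X) : \bar R :=
  ereal_inf [set (rho x x')%:E | x' in [set x' | eta x' <> eta x]].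

Definition diam (R : realType) (X : Type) (rho : X -> X -> R) (U : set X) : \bar R :=
  ereal_sup [set (rho z z')%:E | z in U & z' in U].

Definition mutually_labeling (R : realType) (X Y : Type) (rho : X -> X -> R)
    (eta : X -> Y) (U : set X) : Prop :=
  forall x, U x -> (diam rho U < margin rho eta x)%E.

Definition nn_process (R : realType) (X : Type) (rho : X -> X -> R)
    (Xs Xt : nat -> X) : Prop :=
  forall n, (1 <= n)%N ->
    (exists2 i, (i < n)%N & Xt n = Xs i) /\
    (forall j, (j < n)%N -> rho (Xs n) (Xt n) <= rho (Xs n) (Xs j)).

From HB Require Import structures.
From mathcomp Require Import all_boot all_order all_algebra.
From mathcomp Require Import boolp classical_sets reals constructive_ereal ereal.
Set Implicit Arguments. Unset Strict Implicit. Unset Printing Implicit Defensive.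
Import Order.TTheory GRing.Theory Num.Theory.
Local Open Scope classical_set_scope.

(* If X_n lies in U and is mislabeled by its nearest neighbor, then no earlier
   X_m lies in U: otherwise
     rho(X_n, ~X_n) <= rho(X_n, X_m) <= diam U < margin(X_n) <= rho(X_n, ~X_n).
   So a mistake inside U can only happen at the first visit of U, hence at
   most once. *)

Lemma margin_le (R : realType) (X Y : Type) (rho : X -> X -> R) (eta : X -> Y)
    (x y : X) :
  eta y <> eta x -> (margin rho eta x <= (rho x y)%:E)%E.
Proof. by move=> neq; apply: ereal_inf_lbound; exists y. Qed.

Lemma diam_ge (R : realType) (X : Type) (rho : X -> X -> R) (U : set X)
    (z z' : X) :
  U z -> U z' -> ((rho z z')%:E <= diam rho U)%E.
Proof. by move=> Uz Uz'; apply: ereal_sup_ubound; exists z => //; exists z'. Qed.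

Lemma mutually_labeling_lt (R : realType) (X Y : Type) (rho : X -> X -> R)
    (eta : X -> Y) (U : set X) (x x' y : X) :
  mutually_labeling rho eta U -> U x -> U x' -> eta y <> eta x ->
  (rho x x' < rho x y)%R.
Proof.
move=> ML Ux Ux' neq; rewrite -lte_fin.
apply: (le_lt_trans (diam_ge rho Ux Ux') _).
exact: lt_le_trans (ML x Ux) (margin_le rho neq).
Qed.

Lemma nn_mistake_first_visit (R : realType) (X Y : Type) (rho : X -> X -> R)
    (eta : X -> Y) (U : set X) (Xs Xt : nat -> X) (m n : nat) :
  mutually_labeling rho eta U -> nn_process rho Xs Xt -> (m < n)%N ->
  U (Xs n) -> eta (Xt n) <> eta (Xs n) -> ~ U (Xs m).
Proof.
move=> ML NN lt_mn Un neq Um.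
have [_ nearest] := NN n (leq_ltn_trans (leq0n m) lt_mn).
have := mutually_labeling_lt ML Un Um neq.
by rewrite ltNge (nearest m lt_mn).
Qed.

Lemma sum_nat_le1 (b : nat -> bool) (a c : nat) :
  (forall m n, (m < n)%N -> b n -> ~~ b m) -> (\sum_(a <= n < c) b n <= 1)%N.
Proof.
move=> excl; elim: c => [|c IH]; first by rewrite big_geq.
have [le_ac|lt_ca] := leqP a c; last by rewrite big_geq.
rewrite big_nat_recr //=; case: (boolP (b c)) => [bc|_]; last by rewrite addn0 IH.
rewrite big1_seq // => m; rewrite mem_index_iota => /andP[_ /andP[_ lt_mc]].
by rewrite (negbTE (excl m c lt_mc bc)).
Qed.

Theorem lemma2 (R : realType) (X Y : Type) (rho : X -> X -> R) (eta : X -> Y)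
    (U : set X) (Xs Xt : nat -> X) :
  is_metric rho -> mutually_labeling rho eta U -> nn_process rho Xs Xt ->
  forall N : nat,
    (\sum_(1 <= n < N.+1) (`[< U (Xs n) /\ eta (Xs n) <> eta (Xt n) >] : nat) <= 1)%N.
Proof.
move=> _ ML NN N; apply: sum_nat_le1 => m n lt_mn.
move=> /asboolP[Un neq]; apply/asboolP => -[Um _].
exact: nn_mistake_first_visit ML NN lt_mn Un (nesym neq) Um.
Qed.
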